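(* Let $(\mathfrak g,[\cdot,\cdot],\alpha,\varepsilon,B)$ be a quadratic multiplicative color Hom-Lie algebra, $\rho$ a faithful representation of $\mathfrak g$ on $(M,\beta)$ with $\alpha^2=\mathrm{id}$ and $\beta^2=\mathrm{id}$, and assume that $\tilde\rho$, $\tilde\rho(x)(f)=-\varepsilon(x,f)\,f\circ\rho(x)$, is a representation of $\mathfrak g$ on $(M^*,\tilde\beta)$, $\tilde\beta(f)=f\circ\beta$. Let $\mathscr D:M\otimes M^*\to\mathfrak g$ be the even linear map with $B(x,\mathscr D(m\otimes f))=\langle\rho(\alpha(x))(m),f\rangle$ for all $x\in\mathfrak g$, where $\langle n,f\rangle=\varepsilon(n,f)f(n)$. Define on $M\otimes M^*$ the bracket $[m\otimes f,m'\otimes f']=\rho(\mathscr D(m\otimes f))(m')\otimes\tilde\beta(f')+\varepsilon(m+f,m')\,\beta(m')\otimes\tilde\rho(\mathscr D(m\otimes f))(f')$ and $\tau=\beta\otimes\tilde\beta$. Then $(M\otimes M^*,[\cdot,\cdot],\tau,\varepsilon)$ is a color Hom-Leibniz algebra, i.e. for all homogeneous $u,v,w\in M\otimes M^*$: $[\tau(u),[v,w]]=[[u,v],\tau(w)]+\varepsilon(u,v)[\tau(v),[u,w]]$.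
   Context: $\mathbb K$ is a field of characteristic zero and $\Gamma$ an abelian group. A bicharacter is a map $\varepsilon:\Gamma\times\Gamma\to\mathbb K\setminus\{0\}$ with $\varepsilon(a,b)\varepsilon(b,a)=1$, $\varepsilon(a,b+c)=\varepsilon(a,b)\varepsilon(a,c)$, $\varepsilon(a+b,c)=\varepsilon(a,c)\varepsilon(b,c)$; for homogeneous elements $\varepsilon(x,y)=\varepsilon(\deg x,\deg y)$. A color Hom-Lie algebra $(\mathfrak g,[\cdot,\cdot],\alpha,\varepsilon)$: $\Gamma$-graded space, even bilinear bracket, even linear $\alpha$, with $[x,y]=-\varepsilon(x,y)[y,x]$ and $\varepsilon(z,x)[\alpha(x),[y,z]]+\varepsilon(x,y)[\alpha(y),[z,x]]+\varepsilon(y,z)[\alpha(z),[x,y]]=0$; multiplicative means $\alpha([x,y])=[\alpha(x),\alpha(y)]$; quadratic means equipped with a nondegenerate $\varepsilon$-symmetric invariant ($B([x,y],z)=B(x,[y,z])$) bilinear form $B$ with $B(\alpha(x),y)=B(x,\alpha(y))$. A representation of a multiplicative $\mathfrak g$ on $(M,\beta)$ is an even linear $\rho:\mathfrak g\to\mathfrak{gl}(M)$ with $\rho([x,y])\circ\beta=\rho(\alpha(x))\circ\rho(y)-\varepsilon(x,y)\rho(\alpha(y))\circ\rho(x)$ and $\beta\circ\rho(x)=\rho(\alpha(x))\circ\beta$; faithful means $\rho$ injective. $M^*$ is the graded dual; $M\otimes M^*$ is graded by total degree. *)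

From HB Require Import structures.
From mathcomp Require Import all_boot all_order all_algebra.
Set Implicit Arguments. Unset Strict Implicit. Unset Printing Implicit Defensive.
Import Order.TTheory GRing.Theory Num.Theory.
Local Open Scope ring_scope.

(* Conventions.
   - A Gamma-graded K-space is an lmodType V with a family of predicates
     D : Gamma -> V -> Prop (D a x means "x is homogeneous of degree a")
     such that V is the direct sum of the subspaces D a.
   - The graded dual M^* is realized inside the functions M -> K:
     a functional f is homogeneous of degree b (f in (M^* )_b = (M_{-b})^* )
     iff it is linear and vanishes on every M_c with c + b <> 0;
     M^* consists of finite sums of such functionals.
   - M (x) M^* is any K-space T with a map tens satisfying the universal
     property of the tensor product of M and M^*. *)

Section Defs.
Variables (K : fieldType) (G : zmodType).

Definition bicharacter (eps : G -> G -> K) : Prop :=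
  (forall a b, eps a b != 0) /\
  (forall a b, eps a b * eps b a = 1) /\
  (forall a b c, eps a (b + c) = eps a b * eps a c) /\
  (forall a b c, eps (a + b) c = eps a c * eps b c).

Definition lin (U V : lmodType K) (f : U -> V) : Prop :=
  forall (c : K) (u v : U), f (c *: u + v) = c *: f u + f v.

Definition bilin (U V W : lmodType K) (f : U -> V -> W) : Prop :=
  (forall u, lin (f u)) /\ (forall v, lin (fun u => f u v)).

Definition lin_form (U : lmodType K) (f : U -> K) : Prop :=
  forall (c : K) (u v : U), f (c *: u + v) = c * f u + f v.

Definition subspace (V : lmodType K) (P : V -> Prop) : Prop :=
  P 0 /\ (forall (c : K) u v, P u -> P v -> P (c *: u + v)).

Definition graded (V : lmodType K) (D : G -> V -> Prop) : Prop :=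
  (forall a, subspace (D a)) /\
  (forall v : V, exists n (a : 'I_n -> G) (w : 'I_n -> V),
      (forall i, D (a i) (w i)) /\ v = \sum_(i < n) w i) /\
  (forall n (a : 'I_n -> G) (w : 'I_n -> V), injective a ->
      (forall i, D (a i) (w i)) -> \sum_(i < n) w i = 0 -> forall i, w i = 0).

Definition even_map (V W : lmodType K) (DV : G -> V -> Prop) (DW : G -> W -> Prop)
  (f : V -> W) : Prop := forall a v, DV a v -> DW a (f v).

Definition color_hom_lie (g : lmodType K) (Dg : G -> g -> Prop)
  (br : g -> g -> g) (al : g -> g) (eps : G -> G -> K) : Prop :=
  graded Dg /\ bicharacter eps /\ bilin br /\ lin al /\ even_map Dg Dg al /\
  (forall a b x y, Dg a x -> Dg b y -> Dg (a + b) (br x y)) /\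
  (forall a b x y, Dg a x -> Dg b y -> br x y = - (eps a b *: br y x)) /\
  (forall a b c x y z, Dg a x -> Dg b y -> Dg c z ->
      eps c a *: br (al x) (br y z) + eps a b *: br (al y) (br z x)
      + eps b c *: br (al z) (br x y) = 0).

Definition hom_multiplicative (g : lmodType K) (br : g -> g -> g) (al : g -> g) : Prop :=
  forall x y, al (br x y) = br (al x) (al y).

Definition quadratic_form (g : lmodType K) (Dg : G -> g -> Prop)
  (br : g -> g -> g) (al : g -> g) (eps : G -> G -> K) (B : g -> g -> K) : Prop :=
  (forall x, lin_form (B x)) /\ (forall y, lin_form (fun x => B x y)) /\
  (forall x, (forall y, B x y = 0) -> x = 0) /\
  (forall a b x y, Dg a x -> Dg b y -> B x y = eps a b * B y x) /\
  (forall x y z, B (br x y) z = B x (br y z)) /\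
  (forall x y, B (al x) y = B x (al y)).

Definition representation (g : lmodType K) (Dg : G -> g -> Prop)
  (br : g -> g -> g) (al : g -> g) (eps : G -> G -> K)
  (M : lmodType K) (DM : G -> M -> Prop) (rho : g -> M -> M) (be : M -> M) : Prop :=
  graded DM /\ lin be /\ even_map DM DM be /\
  (forall x, lin (rho x)) /\
  (forall (c : K) x y m, rho (c *: x + y) m = c *: rho x m + rho y m) /\
  (forall a b x m, Dg a x -> DM b m -> DM (a + b) (rho x m)) /\
  (forall a b x y m, Dg a x -> Dg b y ->
      rho (br x y) (be m) = rho (al x) (rho y m) - eps a b *: rho (al y) (rho x m)) /\
  (forall x m, be (rho x m) = rho (al x) (be m)).

Definition dual_hom (M : lmodType K) (DM : G -> M -> Prop) (b : G) (f : M -> K) : Prop :=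
  lin_form f /\ (forall c m, DM c m -> c + b != 0 -> f m = 0).

Definition gdual (M : lmodType K) (DM : G -> M -> Prop) (f : M -> K) : Prop :=
  exists n (b : 'I_n -> G) (h : 'I_n -> M -> K),
    (forall i, dual_hom DM (b i) (h i)) /\ (forall m, f m = \sum_(i < n) h i m).

(* dual action: rho~(x)(f) = - eps(x, f) f o rho(x), for x of degree a, f of degree b *)
Definition rhot (g M : lmodType K) (eps : G -> G -> K) (rho : g -> M -> M)
  (a b : G) (x : g) (f : M -> K) : M -> K :=
  fun n => - (eps a b * f (rho x n)).

Definition dual_representation (g : lmodType K) (Dg : G -> g -> Prop)
  (br : g -> g -> g) (al : g -> g) (eps : G -> G -> K)
  (M : lmodType K) (DM : G -> M -> Prop) (rho : g -> M -> M) (be : M -> M) : Prop :=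
  (forall a b c x y f, Dg a x -> Dg b y -> dual_hom DM c f -> forall n,
      rhot eps rho (a + b) c (br x y) (f \o be) n =
      rhot eps rho a (b + c) (al x) (rhot eps rho b c y f) n
      - eps a b * rhot eps rho b (a + c) (al y) (rhot eps rho a c x f) n) /\
  (forall a c x f, Dg a x -> dual_hom DM c f -> forall n,
      rhot eps rho a c x f (be n) = rhot eps rho a c (al x) (f \o be) n).

Definition bilin_dual (M W : lmodType K) (DM : G -> M -> Prop)
  (phi : M -> (M -> K) -> W) : Prop :=
  (forall (c : K) m m' f, gdual DM f -> phi (c *: m + m') f = c *: phi m f + phi m' f) /\
  (forall (c : K) m f f', gdual DM f -> gdual DM f' ->
      phi m (fun n => c * f n + f' n) = c *: phi m f + phi m f').

Definition is_tensor (M : lmodType K) (DM : G -> M -> Prop)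
  (T : lmodType K) (tens : M -> (M -> K) -> T) : Prop :=
  bilin_dual DM tens /\
  (forall t : T, exists n (m : 'I_n -> M) (f : 'I_n -> M -> K),
      (forall i, gdual DM (f i)) /\ t = \sum_(i < n) tens (m i) (f i)) /\
  (forall (W : lmodType K) (phi : M -> (M -> K) -> W), bilin_dual DM phi ->
      exists psi : T -> W, lin psi /\
        forall m f, gdual DM f -> psi (tens m f) = phi m f).

Definition tdeg (M : lmodType K) (DM : G -> M -> Prop)
  (T : lmodType K) (tens : M -> (M -> K) -> T) (c : G) (t : T) : Prop :=
  exists n (a b : 'I_n -> G) (m : 'I_n -> M) (f : 'I_n -> M -> K),
    (forall i, DM (a i) (m i) /\ dual_hom DM (b i) (f i) /\ a i + b i = c) /\
    t = \sum_(i < n) tens (m i) (f i).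

End Defs.

(* The bracket on M (x) M^* is [u, w] = Phi_(D u) w, where Phi_x acts on a pure
   tensor by rho(x) (x) be~ + be (x) rho~(x) (with the sign eps).  Nondegeneracy
   of B turns the defining property of D into D (tau u) = al (D u) and
   D [u, v] = [D u, D v].  The Hom-Leibniz identity on pure tensors thus becomes
   Phi_[x,y] o tau = Phi_(al x) Phi_y - eps(x, y) Phi_(al y) Phi_x, which follows
   from the representation identities of rho and rho~; trilinearity extends it
   to all homogeneous elements. *)

From HB Require Import structures.
From mathcomp Require Import all_boot all_order all_algebra.
From mathcomp Require Import ring.
From Stdlib Require Import FunctionalExtensionality.
Import GRing.Theory.
Local Open Scope ring_scope.
Set Implicit Arguments. Unset Strict Implicit.

Section Linear.
Variable K : fieldType.
Implicit Types U V : lmodType K.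

Lemma lin0 U V (f : U -> V) : lin f -> f 0 = 0.
Proof.
move=> fL; have := fL 1 0 0; rewrite !scale1r addr0 => f0D.
by apply: (addIr (f 0)); rewrite add0r -f0D.
Qed.

Lemma linD U V (f : U -> V) u v : lin f -> f (u + v) = f u + f v.
Proof. by move=> fL; have := fL 1 u v; rewrite !scale1r. Qed.

Lemma linZ U V (f : U -> V) c u : lin f -> f (c *: u) = c *: f u.
Proof. by move=> fL; rewrite -[c *: u]addr0 fL (lin0 fL) addr0. Qed.

Lemma linB U V (f : U -> V) u v : lin f -> f (u - v) = f u - f v.
Proof. by move=> fL; rewrite addrC -scaleN1r fL scaleN1r addrC. Qed.

Lemma lin_sum U V (f : U -> V) I (r : seq I) (P : pred I) (F : I -> U) : lin f ->
  f (\sum_(i <- r | P i) F i) = \sum_(i <- r | P i) f (F i).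
Proof. by move=> fL; apply: (big_morph f (fun u v => linD u v fL) (lin0 fL)). Qed.

Lemma lin_comp U V (W : lmodType K) (f : V -> W) (h : U -> V) : lin f -> lin h -> lin (f \o h).
Proof. by move=> fL hL c u v /=; rewrite hL fL. Qed.

Lemma lin_add U V (f h : U -> V) : lin f -> lin h -> lin (fun u => f u + h u).
Proof. by move=> fL hL c u v; rewrite fL hL scalerDr addrACA. Qed.

Lemma lin_scale U V (f : U -> V) (e : K) : lin f -> lin (fun u => e *: f u).
Proof. by move=> fL c u v; rewrite fL scalerDr !scalerA mulrC. Qed.

Lemma lin_sub U V (f h : U -> V) : lin f -> lin h -> lin (fun u => f u - h u).
Proof.
by move=> fL hL; apply: lin_add => // c u v; rewrite -!scaleN1r hL !scalerDr !scalerA mulrC.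
Qed.

Lemma lin_form_lin U (f : U -> K) : lin_form f -> @lin _ U K^o f.
Proof. by []. Qed.

Lemma subspaceD V (P : V -> Prop) u v : subspace P -> P u -> P v -> P (u + v).
Proof. by case=> _ PL Pu Pv; have := PL 1 u v Pu Pv; rewrite scale1r. Qed.

Lemma subspaceZ V (P : V -> Prop) c u : subspace P -> P u -> P (c *: u).
Proof. by case=> P0 PL Pu; have := PL c u 0 Pu P0; rewrite addr0. Qed.

Lemma subspaceB V (P : V -> Prop) u v : subspace P -> P u -> P v -> P (u - v).
Proof. by move=> PS Pu Pv; rewrite -scaleN1r; apply: subspaceD => //; apply: subspaceZ. Qed.

Lemma leibniz_combination V (X1 X2 X3 X4 X5 X6 : V) (e1 e1' e2 e3 : K) :
  e1 * e1' = 1 ->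
  (X1 + (e1 * e2) *: X2) + e3 *: (X3 + e2 *: X4) =
  ((X1 - e1 *: X5) + (e2 * e3) *: (X4 - e1 *: X6)) +
  e1 *: ((X5 + (e1' * e3) *: X3) + e2 *: (X2 + e3 *: X6)).
Proof.
move=> e1K; rewrite !(scalerDr, scalerN, scalerA) mulrA e1K mul1r.
rewrite [e3 * e2]mulrC [e2 * e3 * e1]mulrC !mulrA.
rewrite [RHS]addrACA [X1 - _ + _]addrA subrK.
rewrite [_ *: X2 + _]addrC [_ *: X4 - _ + _]addrA subrK.
by rewrite addrACA [(_ *: X4) + _]addrC.
Qed.

End Linear.

Lemma comp_involutive (A B : Type) (phi : A -> A) (f : A -> B) :
  involutive phi -> (f \o phi) \o phi = f.
Proof. by move=> phiK; apply: functional_extensionality => n /=; rewrite phiK. Qed.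

Section GradedDual.
Variables (K : fieldType) (G : zmodType) (M : lmodType K) (DM : G -> M -> Prop).

Lemma dual_hom_gdual b f : dual_hom DM b f -> gdual DM f.
Proof.
by move=> fb; exists 1%N, (fun=> b), (fun=> f); split=> // m; rewrite big_ord1.
Qed.

Lemma dual_hom_comp (phi : M -> M) b f :
  lin phi -> even_map DM DM phi -> dual_hom DM b f -> dual_hom DM b (f \o phi).
Proof.
move=> phiL phi_even [fL f0]; split=> [c u v /= | c m mc cb /=].
  by rewrite phiL fL.
exact: f0 (phi_even _ _ mc) cb.
Qed.

Lemma dual_hom_rhot (g : lmodType K) (Dg : G -> g -> Prop) (eps : G -> G -> K)
    (rho : g -> M -> M) a d x f :
  (forall x, lin (rho x)) -> (forall a b x m, Dg a x -> DM b m -> DM (a + b) (rho x m)) ->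
  Dg a x -> dual_hom DM d f -> dual_hom DM (a + d) (rhot eps rho a d x f).
Proof.
move=> rhoL rho_deg xa [fL f0]; split=> [c u v | c m mc cad]; rewrite /rhot.
  by rewrite rhoL fL; ring.
rewrite (f0 (a + c)) ?mulr0 ?oppr0 //; first exact: rho_deg xa mc.
by rewrite -addrA addrCA.
Qed.

Section BilinearOnDual.
Variables (W : lmodType K) (phi : M -> (M -> K) -> W).
Hypothesis phiL : bilin_dual DM phi.

Lemma bilin_dual_linl f : gdual DM f -> lin (phi^~ f).
Proof. by move=> fM c m m'; apply: phiL.1. Qed.

Lemma bilin_dual_subr m f f' c : gdual DM f -> gdual DM f' ->
  phi m (fun n => f n - c * f' n) = phi m f - c *: phi m f'.
Proof.
move=> fM f'M; have -> : (fun n => f n - c * f' n) = (fun n => - c * f' n + f n).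
  by apply: functional_extensionality => n; rewrite addrC mulNr.
by rewrite phiL.2 // scaleNr addrC.
Qed.

End BilinearOnDual.
End GradedDual.

Section HomLeibniz.
Variables (K : fieldType) (G : zmodType)
  (g : lmodType K) (Dg : G -> g -> Prop) (br : g -> g -> g) (al : g -> g)
  (eps : G -> G -> K) (B : g -> g -> K)
  (M : lmodType K) (DM : G -> M -> Prop) (rho : g -> M -> M) (be : M -> M)
  (T : lmodType K) (tens : M -> (M -> K) -> T)
  (Dmap : T -> g) (brT : T -> T -> T) (tau : T -> T).

Hypothesis g_hom_lie : color_hom_lie Dg br al eps.
Hypothesis al_multiplicative : hom_multiplicative br al.
Hypothesis B_quadratic : quadratic_form Dg br al eps B.
Hypothesis rho_rep : representation Dg br al eps DM rho be.
Hypothesis alK : involutive al.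
Hypothesis beK : involutive be.
Hypothesis rhot_rep : dual_representation Dg br al eps DM rho be.
Hypothesis tens_tensor : is_tensor DM tens.
Hypothesis Dmap_lin : lin Dmap.
Hypothesis Dmap_deg : forall c t, tdeg DM tens c t -> Dg c (Dmap t).
Hypothesis B_Dmap : forall a c d x m f, Dg a x -> DM c m -> dual_hom DM d f ->
  B x (Dmap (tens m f)) = eps (a + c) d * f (rho (al x) m).
Hypothesis tau_lin : lin tau.
Hypothesis tau_tens : forall m f, gdual DM f -> tau (tens m f) = tens (be m) (f \o be).
Hypothesis brT_bilin : bilin brT.
Hypothesis brT_tens : forall a b c d m f m' f',
  DM a m -> dual_hom DM b f -> DM c m' -> dual_hom DM d f' ->
  brT (tens m f) (tens m' f') =
    tens (rho (Dmap (tens m f)) m') (f' \o be)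
    + eps (a + b) c *: tens (be m') (rhot eps rho (a + b) d (Dmap (tens m f)) f').

Let Dg_subspace a : subspace (Dg a).
Proof. by case: g_hom_lie => -[]. Qed.
Let Dg_decomp (x : g) : exists n (a : 'I_n -> G) (w : 'I_n -> g),
  (forall i, Dg (a i) (w i)) /\ x = \sum_(i < n) w i.
Proof. by case: g_hom_lie => -[_ []]. Qed.
Let eps_neq0 a b : eps a b != 0.
Proof. by case: g_hom_lie => _ [[]]. Qed.
Let eps_antisym a b : eps a b * eps b a = 1.
Proof. by case: g_hom_lie => _ [[_ []]]. Qed.
Let epsDr a b c : eps a (b + c) = eps a b * eps a c.
Proof. by case: g_hom_lie => _ [[_ [_ []]]]. Qed.
Let epsDl a b c : eps (a + b) c = eps a c * eps b c.
Proof. by case: g_hom_lie => _ [[_ [_ [_]]]]. Qed.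
Let al_even : even_map Dg Dg al.
Proof. by case: g_hom_lie => _ [_ [_ [_ []]]]. Qed.
Let br_deg a b x y : Dg a x -> Dg b y -> Dg (a + b) (br x y).
Proof. by case: g_hom_lie => _ [_ [_ [_ [_ [deg _]]]]]; apply: deg. Qed.

Let B_linr x : lin_form (B x).
Proof. by case: B_quadratic => BL _; apply: BL. Qed.
Let B_nondeg x : (forall y, B x y = 0) -> x = 0.
Proof. by case: B_quadratic => _ [_ [nd _]]; apply: nd. Qed.
Let B_eps_sym a b x y : Dg a x -> Dg b y -> B x y = eps a b * B y x.
Proof. by case: B_quadratic => _ [_ [_ [sym _]]]; apply: sym. Qed.
Let B_invariant x y z : B (br x y) z = B x (br y z).
Proof. by case: B_quadratic => _ [_ [_ [_ []]]]. Qed.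
Let B_al x y : B (al x) y = B x (al y).
Proof. by case: B_quadratic => _ [_ [_ [_ [_]]]]. Qed.

Let be_lin : lin be.
Proof. by case: rho_rep => _ []. Qed.
Let be_even : even_map DM DM be.
Proof. by case: rho_rep => _ [_ []]. Qed.
Let rho_lin x : lin (rho x).
Proof. by case: rho_rep => _ [_ [_ []]]. Qed.
Let rho_linl (c : K) x y m : rho (c *: x + y) m = c *: rho x m + rho y m.
Proof. by case: rho_rep => _ [_ [_ [_ []]]]. Qed.
Let rho_deg a b x m : Dg a x -> DM b m -> DM (a + b) (rho x m).
Proof. by case: rho_rep => _ [_ [_ [_ [_ [deg _]]]]]; apply: deg. Qed.
Let rho_br a b x y m : Dg a x -> Dg b y ->
  rho (br x y) (be m) = rho (al x) (rho y m) - eps a b *: rho (al y) (rho x m).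
Proof. by case: rho_rep => _ [_ [_ [_ [_ [_ [rep _]]]]]]; apply: rep. Qed.
Let be_rho x m : be (rho x m) = rho (al x) (be m).
Proof. by case: rho_rep => _ [_ [_ [_ [_ [_ []]]]]]. Qed.

Let rhot_br a b c x y f : Dg a x -> Dg b y -> dual_hom DM c f ->
  rhot eps rho (a + b) c (br x y) (f \o be) =
  (fun n => rhot eps rho a (b + c) (al x) (rhot eps rho b c y f) n
            - eps a b * rhot eps rho b (a + c) (al y) (rhot eps rho a c x f) n).
Proof.
by case: rhot_rep => rep _ xa yb fc; apply: functional_extensionality; apply: rep.
Qed.
Let rhot_comp_be a c x f : Dg a x -> dual_hom DM c f ->
  rhot eps rho a c x f \o be = rhot eps rho a c (al x) (f \o be).
Proof.
by case: rhot_rep => _ rep xa fc; apply: functional_extensionality; apply: rep.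
Qed.

Let tens_bilin : bilin_dual DM tens.
Proof. by case: tens_tensor. Qed.
Let brT_linr u : lin (brT u).
Proof. by case: brT_bilin => BL _; apply: BL. Qed.
Let brT_linl v : lin (brT^~ v).
Proof. by case: brT_bilin => _ BR; apply: BR. Qed.

Lemma Dmap_tens_deg a b S m f :
  DM a m -> dual_hom DM b f -> a + b = S -> Dg S (Dmap (tens m f)).
Proof.
move=> ma fb <-; apply: Dmap_deg.
by exists 1%N, (fun=> a), (fun=> b), (fun=> m), (fun=> f); rewrite big_ord1.
Qed.

Lemma B_nondeg_homog S w : Dg S w -> (forall e z, Dg e z -> B z w = 0) -> w = 0.
Proof.
move=> wS Bw0; apply: B_nondeg => y; have [n [a [v [va ->]]]] := Dg_decomp y.
rewrite (lin_sum _ _ _ (lin_form_lin (B_linr w))); apply: big1 => i _.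
by rewrite (B_eps_sym wS (va i)) (Bw0 _ _ (va i)) mulr0.
Qed.

Lemma Dmap_tens_be p q m f : DM p m -> dual_hom DM q f ->
  Dmap (tens (be m) (f \o be)) = al (Dmap (tens m f)).
Proof.
move=> mp fq; apply/eqP; rewrite -subr_eq0; apply/eqP.
apply: (@B_nondeg_homog (p + q)).
  apply: subspaceB (Dg_subspace _) _ _.
    exact: Dmap_tens_deg (be_even mp) (dual_hom_comp be_lin be_even fq) _.
  exact/al_even/(Dmap_tens_deg mp fq).
move=> e z ze; have BL := lin_form_lin (B_linr z).
rewrite (linB _ _ BL) (B_Dmap ze (be_even mp) (dual_hom_comp be_lin be_even fq)).
by rewrite -B_al (B_Dmap (al_even ze) mp fq) /= be_rho !alK beK subrr.
Qed.

(* Phi_z on the pure tensor m (x) f, for z of degree Z, m of degree c, f of degree d. *)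
Definition tens_act (Z : G) (z : g) (m : M) (c : G) (f : M -> K) (d : G) : T :=
  tens (rho z m) (f \o be) + eps Z c *: tens (be m) (rhot eps rho Z d z f).

Lemma Dmap_tens_act A x m c f d : Dg A x -> DM c m -> dual_hom DM d f ->
  Dmap (tens_act A x m c f d) = br x (Dmap (tens m f)).
Proof.
move=> xA mc fd; have fLK := lin_form_lin fd.1.
have fbe := dual_hom_comp be_lin be_even fd; have fx := dual_hom_rhot eps rho_lin rho_deg xA fd.
have xmf : Dg (A + (c + d)) (br x (Dmap (tens m f))).
  exact/br_deg/(Dmap_tens_deg mc fd).
rewrite /tens_act (linD _ _ Dmap_lin) (linZ _ _ Dmap_lin).
apply/eqP; rewrite -subr_eq0; apply/eqP; apply: (B_nondeg_homog (S := A + (c + d))).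
  apply: subspaceB (Dg_subspace _) _ xmf; apply: subspaceD (Dg_subspace _) _ _.
    by apply: Dmap_tens_deg (rho_deg xA mc) fbe _; rewrite addrA.
  by apply: subspaceZ (Dg_subspace _) _; apply: Dmap_tens_deg (be_even mc) fx _; rewrite addrCA.
move=> e z ze; have BL := lin_form_lin (B_linr z).
rewrite (linB _ _ BL) (linD _ _ BL) (linZ _ _ BL) /GRing.scale /=.
rewrite (B_Dmap ze (rho_deg xA mc) fbe) (B_Dmap ze (be_even mc) fx).
rewrite -B_invariant (B_Dmap (br_deg ze xA) mc fd) /rhot /= al_multiplicative.
have := rho_br (be m) (al_even ze) (al_even xA); rewrite beK !alK => ->.
rewrite (linB _ _ fLK) (linZ _ _ fLK) be_rho alK be_rho.
have eps_swap : eps c A = (eps A c)^-1.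
  by apply: (mulfI (eps_neq0 A c)); rewrite eps_antisym divff.
by rewrite !epsDl !epsDr eps_swap /GRing.scale /=; field.
Qed.

Lemma brT_tens_act p q S m f c d m' f' : DM p m -> dual_hom DM q f -> p + q = S ->
  DM c m' -> dual_hom DM d f' ->
  brT (tens m f) (tens m' f') = tens_act S (Dmap (tens m f)) m' c f' d.
Proof. by move=> mp fq <- m'c f'd; rewrite (brT_tens mp fq m'c f'd). Qed.

Lemma tens_act_addl S z1 z2 e m c f d : Dg S z1 -> Dg S z2 -> dual_hom DM d f ->
  tens_act S z1 m c f d + e *: tens_act S z2 m c f d = tens_act S (z1 + e *: z2) m c f d.
Proof.
move=> z1S z2S fd; have tensL := bilin_dual_linl tens_bilin.
have fbe := dual_hom_gdual (dual_hom_comp be_lin be_even fd).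
rewrite /tens_act; have -> : rhot eps rho S d (z1 + e *: z2) f =
    (fun n => e * rhot eps rho S d z2 f n + rhot eps rho S d z1 f n).
  by apply: functional_extensionality => n; rewrite /rhot addrC rho_linl fd.1; ring.
rewrite [z1 + _]addrC rho_linl (linD _ _ (tensL _ fbe)) (linZ _ _ (tensL _ fbe)).
have r1 := dual_hom_gdual (dual_hom_rhot eps rho_lin rho_deg z1S fd).
have r2 := dual_hom_gdual (dual_hom_rhot eps rho_lin rho_deg z2S fd).
rewrite tens_bilin.2 //.
rewrite !scalerDr !scalerA [eps S c * e]mulrC addrACA.
by congr (_ + _); apply: addrC.
Qed.

Lemma brT_tau_tens_act p q m f Z z c d m' f' :
  DM p m -> dual_hom DM q f -> Dg Z z -> DM c m' -> dual_hom DM d f' ->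
  let x := Dmap (tens m f) in
  brT (tau (tens m f)) (tens_act Z z m' c f' d) =
    tens_act (p + q) (al x) (rho z m') (Z + c) (f' \o be) d
    + eps Z c *: tens_act (p + q) (al x) (be m') c (rhot eps rho Z d z f') (Z + d).
Proof.
move=> mp fq zZ m'c f'd x.
have fbe := dual_hom_comp be_lin be_even fq.
rewrite tau_tens; last exact: dual_hom_gdual fq.
rewrite [tens_act Z _ _ _ _ _]/tens_act.
rewrite (linD _ _ (brT_linr _)) (linZ _ _ (brT_linr _)) -(Dmap_tens_be mp fq).
rewrite (brT_tens_act (be_even mp) fbe erefl (rho_deg zZ m'c) (dual_hom_comp be_lin be_even f'd)).
by rewrite (brT_tens_act (be_even mp) fbe erefl (be_even m'c) (dual_hom_rhot eps rho_lin rho_deg zZ f'd)).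
Qed.

Lemma brT_brT_tens p q p' q' m f m' f' c d m'' f'' :
  DM p m -> dual_hom DM q f -> DM p' m' -> dual_hom DM q' f' ->
  DM c m'' -> dual_hom DM d f'' ->
  brT (brT (tens m f) (tens m' f')) (tens m'' f'') =
    tens_act (p + q + (p' + q')) (br (Dmap (tens m f)) (Dmap (tens m' f'))) m'' c f'' d.
Proof.
move=> mp fq m'p' f'q' m''c f''d.
have xS := Dmap_tens_deg mp fq erefl.
have f'be := dual_hom_comp be_lin be_even f'q'.
have f'x := dual_hom_rhot eps rho_lin rho_deg xS f'q'.
have e1 : p + q + p' + q' = p + q + (p' + q') by rewrite addrA.
have e2 : p' + (p + q + q') = p + q + (p' + q') by rewrite addrCA addrA.
rewrite (brT_tens_act mp fq erefl m'p' f'q') -(Dmap_tens_act xS m'p' f'q').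
rewrite [in LHS]/tens_act (linD _ _ (brT_linl _)) (linZ _ _ (brT_linl _)).
rewrite (brT_tens_act (rho_deg xS m'p') f'be e1 m''c f''d).
rewrite (brT_tens_act (be_even m'p') f'x e2 m''c f''d) tens_act_addl //.
- by rewrite /tens_act (linD _ _ Dmap_lin) (linZ _ _ Dmap_lin).
- exact: Dmap_tens_deg (rho_deg xS m'p') f'be e1.
- exact: Dmap_tens_deg (be_even m'p') f'x e2.
Qed.

Lemma hom_leibniz_tens a b a1 b1 a2 b2 a3 b3 m1 f1 m2 f2 m3 f3 :
  DM a1 m1 -> dual_hom DM b1 f1 -> a1 + b1 = a ->
  DM a2 m2 -> dual_hom DM b2 f2 -> a2 + b2 = b ->
  DM a3 m3 -> dual_hom DM b3 f3 ->
  brT (tau (tens m1 f1)) (brT (tens m2 f2) (tens m3 f3)) =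
    brT (brT (tens m1 f1) (tens m2 f2)) (tau (tens m3 f3))
    + eps a b *: brT (tau (tens m2 f2)) (brT (tens m1 f1) (tens m3 f3)).
Proof.
move=> m1a1 f1b1 ea m2a2 f2b2 eb m3a3 f3b3.
have xa := Dmap_tens_deg m1a1 f1b1 ea; have yb := Dmap_tens_deg m2a2 f2b2 eb.
have f3be := dual_hom_comp be_lin be_even f3b3.
rewrite (brT_tens_act m2a2 f2b2 eb m3a3 f3b3) (brT_tens_act m1a1 f1b1 ea m3a3 f3b3).
rewrite (brT_tau_tens_act m1a1 f1b1 yb m3a3 f3b3) (brT_tau_tens_act m2a2 f2b2 xa m3a3 f3b3).
rewrite (tau_tens _ (dual_hom_gdual f3b3)) (brT_brT_tens m1a1 f1b1 m2a2 f2b2 (be_even m3a3) f3be).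
rewrite ea eb /tens_act (comp_involutive _ beK) beK !be_rho.
rewrite (rhot_comp_be yb f3b3) (rhot_comp_be xa f3b3) (rho_br _ xa yb) (rhot_br xa yb f3b3).
have tensL := bilin_dual_linl tens_bilin (dual_hom_gdual f3b3).
have rxy := dual_hom_rhot eps rho_lin rho_deg (al_even xa) (dual_hom_rhot eps rho_lin rho_deg yb f3b3).
have ryx := dual_hom_rhot eps rho_lin rho_deg (al_even yb) (dual_hom_rhot eps rho_lin rho_deg xa f3b3).
rewrite (linB _ _ tensL) (linZ _ _ tensL).
rewrite (bilin_dual_subr tens_bilin _ _ (dual_hom_gdual rxy) (dual_hom_gdual ryx)).
by rewrite epsDl !epsDr; apply: leibniz_combination (eps_antisym a b).
Qed.

Definition leibniz_defect (a b : G) (u v w : T) : T :=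
  brT (tau u) (brT v w) - (brT (brT u v) (tau w) + eps a b *: brT (tau v) (brT u w)).

Lemma leibniz_defect_lin1 a b v w : lin (fun u => leibniz_defect a b u v w).
Proof.
apply: lin_sub; first exact: lin_comp (brT_linl _) tau_lin.
apply: lin_add; first exact: lin_comp (brT_linl _) (brT_linl _).
exact: lin_scale (lin_comp (brT_linr _) (brT_linl _)).
Qed.

Lemma leibniz_defect_lin2 a b u w : lin (fun v => leibniz_defect a b u v w).
Proof.
apply: lin_sub; first exact: lin_comp (brT_linr _) (brT_linl _).
apply: lin_add; first exact: lin_comp (brT_linl _) (brT_linr _).
exact: lin_scale (lin_comp (brT_linl _) tau_lin).
Qed.

Lemma leibniz_defect_lin3 a b u v : lin (leibniz_defect a b u v).
Proof.
apply: lin_sub; first exact: lin_comp (brT_linr _) (brT_linr _).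
apply: lin_add; first exact: lin_comp (brT_linr _) tau_lin.
exact: lin_scale (lin_comp (brT_linr _) (brT_linr _)).
Qed.

Lemma hom_leibniz a b c u v w :
  tdeg DM tens a u -> tdeg DM tens b v -> tdeg DM tens c w ->
  brT (tau u) (brT v w) = brT (brT u v) (tau w) + eps a b *: brT (tau v) (brT u w).
Proof.
move=> [n1 [a1 [b1 [m1 [f1 [uh ->]]]]]] [n2 [a2 [b2 [m2 [f2 [vh ->]]]]]].
move=> [n3 [a3 [b3 [m3 [f3 [wh ->]]]]]].
apply/eqP; rewrite -subr_eq0; apply/eqP; rewrite -/(leibniz_defect a b _ _ _).
rewrite (lin_sum _ _ _ (leibniz_defect_lin1 _ _ _ _)); apply: big1 => i _.
rewrite (lin_sum _ _ _ (leibniz_defect_lin2 _ _ _ _)); apply: big1 => j _.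
rewrite (lin_sum _ _ _ (leibniz_defect_lin3 _ _ _ _)); apply: big1 => k _.
have [m1i [f1i e1]] := uh i; have [m2j [f2j e2]] := vh j; have [m3k [f3k _]] := wh k.
by rewrite /leibniz_defect (hom_leibniz_tens m1i f1i e1 m2j f2j e2 m3k f3k) subrr.
Qed.

End HomLeibniz.

Unset Implicit Arguments. Set Strict Implicit.

Theorem mainTheorem14 (K : fieldType) (G : zmodType)
  (g : lmodType K) (Dg : G -> g -> Prop) (br : g -> g -> g) (al : g -> g)
  (eps : G -> G -> K) (B : g -> g -> K)
  (M : lmodType K) (DM : G -> M -> Prop) (rho : g -> M -> M) (be : M -> M)
  (T : lmodType K) (tens : M -> (M -> K) -> T)
  (Dmap : T -> g) (brT : T -> T -> T) (tau : T -> T) :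
  [pchar K] =i pred0 ->
  color_hom_lie Dg br al eps ->
  hom_multiplicative br al ->
  quadratic_form Dg br al eps B ->
  representation Dg br al eps DM rho be ->
  (forall x y, (forall m, rho x m = rho y m) -> x = y) ->
  (forall x, al (al x) = x) ->
  (forall m, be (be m) = m) ->
  dual_representation Dg br al eps DM rho be ->
  is_tensor DM tens ->
  (* the map D *)
  lin Dmap ->
  (forall c t, tdeg DM tens c t -> Dg c (Dmap t)) ->
  (forall a c d x m f, Dg a x -> DM c m -> dual_hom DM d f ->
      B x (Dmap (tens m f)) = eps (a + c) d * f (rho (al x) m)) ->
  (* tau = be (x) be~ *)
  lin tau ->
  (forall m f, gdual DM f -> tau (tens m f) = tens (be m) (f \o be)) ->
  (* the bracket on M (x) M^* *)
  bilin brT ->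
  (forall a b c d m f m' f', DM a m -> dual_hom DM b f -> DM c m' -> dual_hom DM d f' ->
      brT (tens m f) (tens m' f') =
        tens (rho (Dmap (tens m f)) m') (f' \o be)
        + eps (a + b) c *: tens (be m') (rhot eps rho (a + b) d (Dmap (tens m f)) f')) ->
  forall a b c u v w, tdeg DM tens a u -> tdeg DM tens b v -> tdeg DM tens c w ->
    brT (tau u) (brT v w) = brT (brT u v) (tau w) + eps a b *: brT (tau v) (brT u w).
Proof.
move=> _ g_hom_lie al_mult B_quad rho_rep _ alK beK rhot_rep tens_tensor Dmap_lin Dmap_deg.
move=> B_Dmap tau_lin tau_tens brT_bilin brT_tens.
exact: (hom_leibniz g_hom_lie al_mult B_quad rho_rep alK beK rhot_rep tens_tensor
  Dmap_lin Dmap_deg B_Dmap tau_lin tau_tens brT_bilin brT_tens).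
Qed.
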